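(* Assume $\Lambda=\Lambda^{\rm h}=A\mathbb Z^d$, $d=\mathsf d_s\in\{2,3\}$, $x(\ell)=\ell$, $u_0\equiv0$, and that the homogeneous site strain potential $V^{\rm h}$ satisfies (S.R), (S.L) and (S.PS). Then for every $u\in\dot{\mathscr U}^{\rm c}(\Lambda^{\rm h})$ the map $(\ell,\rho)\mapsto V^{\rm h}_{,\rho}(0)\cdot D_\rho u(\ell)$ belongs to $\ell^1(\Lambda^{\rm h}\times\Lambda^{\rm h}_* )$ and $$\sum_{\ell\in\Lambda^{\rm h}}\sum_{\rho\in\Lambda^{\rm h}_*}V^{\rm h}_{,\rho}(0)^{\rm T}D_\rho u(\ell)=0.$$
   Context: $B_R$ is the open ball of radius $R$ at $0$. $A\in\mathbb R^{d\times d}$ nonsingular, $\Lambda^{\rm h}:=A\mathbb Z^d$, $\Lambda^{\rm h}_*:=\Lambda^{\rm h}\setminus\{0\}$. For $u:\Lambda^{\rm h}\to\mathbb R^d$: $D_\rho u(\ell):=u(\ell+\rho)-u(\ell)$, $Du(\ell):=(D_\rho u(\ell))_{\rho\in\Lambda^{\rm h}_*}$; $\dot{\mathscr U}^{\rm c}(\Lambda^{\rm h})$ is the set of $u$ constant outside some ball. For $k>0$, $\mathscr L_k$ is the set of monotonically decreasing $\mathfrak w:[0,\infty)\to(0,\infty)$ with $\|\mathfrak w\|_{L^\infty}+\int_0^\infty r^{k+d-1}\mathfrak w(r)dr<\infty$. For $\mathfrak m,\lambda>0$, $\mathscr A_{\mathfrak m,\lambda}(\Lambda^{\rm h})$ is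 the set of $y:\Lambda^{\rm h}\to\mathbb R^d$ with $B_\lambda(z)\cap y(\Lambda^{\rm h})\neq\emptyset$ for all $z$ and $|y(\ell)-y(m)|\ge\mathfrak m|\ell-m|$; $\mathscr A$ is the union over $\mathfrak m,\lambda>0$. The homogeneous site strain potential $V^{\rm h}$ is a function on $\{Dw(\ell):x+w\in\mathscr A(\Lambda^{\rm h}),\ell\in\Lambda^{\rm h}\}\subset(\mathbb R^d)^{\Lambda^{\rm h}_*}$, with partial derivatives $V^{\rm h}_{,\boldsymbol\rho}(\boldsymbol g):=\partial^jV^{\rm h}(\boldsymbol g)/\partial\boldsymbol g_{\rho_1}\cdots\partial\boldsymbol g_{\rho_j}$. (S.R): $V^{\rm h}$ has partial derivatives up to order $\mathfrak n\ge3$. (S.L): with $\mathcal P(j)$ the set of partitions $\{A_1,\dots,A_k\}$ of $\{1,\dots,j\}$ into nonempty sets and $i'$ the smallest element of $A_i$, there exist $\mathfrak w_i\in\mathscr L_i$ and constants $C_j(\mathfrak m,\lambda)$ with $|V^{\rm h}_{,\boldsymbol\rho}(Dw(\ell))|\le C_j\sum_{\mathcal P(j)}\prod_i\big(\mathfrak w_{|A_i|}(|\rho_{i'}|)\prod_{m\in A_i}\delta_{\rho_{i'}\rho_m}\big)$ for all $w$ with $x+w\in\mathscr A_{\mathfrak m,\lambda}(\Lambda^{\rm h})$, $\ell$, $\boldsymbol\rho\in(\Lambda^{\rm h}_* )^j$, $j\le\mathfrak n$. (S.PS): $V^{\rm h}((-g_{-\rho})_{\rho\in\Lambda^{\rm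 h}_*})=V^{\rm h}(\boldsymbol g)$ for all $\boldsymbol g\in(\mathbb R^d)^{\Lambda^{\rm h}_*}$. *)

From Stdlib Require Import Reals Lra ZArith List.
Import ListNotations.
Open Scope R_scope.

Fixpoint rsum (n : nat) (f : nat -> R) : R :=
  match n with O => 0 | S m => rsum m f + f m end.

(* Vectors of R^d: functions nat -> R, only coordinates i < d are relevant. *)
Definition vnorm (d : nat) (v : nat -> R) : R := sqrt (rsum d (fun i => v i ^ 2)).

(* Points of Z^d: lists of integers of length d. *)
Definition site (d : nat) (k : list Z) : Prop := length k = d.
Definition zero_site (d : nat) : list Z := repeat 0%Z d.
Definition nzsite (d : nat) (k : list Z) : Prop := site d k /\ k <> zero_site d.

Fixpoint zadd (k l : list Z) : list Z :=
  match k, l with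
  | a :: k', b :: l' => (a + b)%Z :: zadd k' l'
  | _, _ => nil
  end.
Definition zneg (k : list Z) : list Z := map Z.opp k.

Definition pos (d : nat) (A : nat -> nat -> R) (k : list Z) : nat -> R :=
  fun i => rsum d (fun j => A i j * IZR (nth j k 0%Z)).

Definition nonsingular (d : nat) (A : nat -> nat -> R) : Prop :=
  forall v : nat -> R,
    (forall i, (i < d)%nat -> rsum d (fun j => A i j * v j) = 0) ->
    forall j, (j < d)%nat -> v j = 0.

(* Strain variables g = (g_rho)_{rho in Lambda_*}, rho = A k encoded by k. *)
Definition G := list Z -> nat -> R.

(* V is a function of (R^d)^{Lambda_*}: it ignores junk indices. *)
Definition respects (d : nat) (V : G -> R) : Prop :=
  forall g g' : G,
    (forall k i, nzsite d k -> (i < d)%nat -> g k i = g' k i) -> V g = V g'.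

Definition upd (g : G) (k : list Z) (i : nat) (t : R) : G :=
  fun k' j => if list_eq_dec Z.eq_dec k' k then
                if Nat.eq_dec j i then g k' j + t else g k' j
              else g k' j.

Definition valid (d : nat) (p : list Z * nat) : Prop := nzsite d (fst p) /\ (snd p < d)%nat.

(* (S.R): DV js are the partial derivatives: DV ((k,i)::js) = d/dg_{k,i} DV js,
   up to order n. *)
Definition SR (d n : nat) (V : G -> R) (DV : list (list Z * nat) -> G -> R) : Prop :=
  DV nil = V /\
  forall js, (length js < n)%nat -> Forall (valid d) js ->
  forall k i, valid d (k, i) -> forall g : G,
    derivable_pt_lim (fun t => DV js (upd g k i t)) 0 (DV ((k, i) :: js) g).

Definition in_L (d k : nat) (w : R -> R) : Prop :=
  (forall r s, 0 <= r -> r <= s -> w s <= w r) /\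
  (forall r, 0 <= r -> 0 < w r) /\
  (exists B, forall r, 0 <= r -> w r <= B) /\
  (exists M, forall Rr (pr : Riemann_integrable (fun r => r ^ (k + d - 1) * w r) 0 Rr),
      0 <= Rr -> RiemannInt pr <= M).

Definition inA (d : nat) (A : nat -> nat -> R) (m lam : R) (y : list Z -> nat -> R) : Prop :=
  (forall z : nat -> R, exists l, site d l /\ vnorm d (fun i => y l i - z i) < lam) /\
  (forall l l', site d l -> site d l' ->
     vnorm d (fun i => y l i - y l' i) >= m * vnorm d (fun i => pos d A l i - pos d A l' i)).

Definition Dw (w : list Z -> nat -> R) (l : list Z) : G :=
  fun rho i => w (zadd l rho) i - w l i.

(* set partitions of a list; blocks are lists whose head is the smallest element *)
Fixpoint add_to_blocks (x : nat) (p : list (list nat)) : list (list (list nat)) :=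
  match p with
  | nil => nil
  | B :: p' => ((x :: B) :: p') :: map (cons B) (add_to_blocks x p')
  end.
Definition extend (x : nat) (p : list (list nat)) : list (list (list nat)) :=
  ([x] :: p) :: add_to_blocks x p.
Fixpoint partitions (l : list nat) : list (list (list nat)) :=
  match l with
  | nil => [nil]
  | x :: l' => flat_map (extend x) (partitions l')
  end.

Definition delta (k l : list Z) : R := if list_eq_dec Z.eq_dec k l then 1 else 0.
Definition rprod (l : list R) : R := fold_right Rmult 1 l.
Definition rsuml (l : list R) : R := fold_right Rplus 0 l.

Definition block_term (d : nat) (A : nat -> nat -> R) (w : nat -> R -> R)
    (rhos : list (list Z)) (B : list nat) : R :=
  let b := hd O B in
  w (length B) (vnorm d (pos d A (nth b rhos nil))) *
  rprod (map (fun m => delta (nth b rhos nil) (nth m rhos nil)) B).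

Definition SL_bound (d : nat) (A : nat -> nat -> R) (w : nat -> R -> R)
    (rhos : list (list Z)) : R :=
  rsuml (map (fun P => rprod (map (block_term d A w rhos) P))
             (partitions (seq 0 (length rhos)))).

(* (S.L), componentwise (equivalent up to constants to a tensor-norm bound) *)
Definition SL (d : nat) (A : nat -> nat -> R) (n : nat) (DV : list (list Z * nat) -> G -> R) : Prop :=
  exists w : nat -> R -> R,
    (forall k, (1 <= k <= n)%nat -> in_L d k (w k)) /\
    forall m lam, 0 < m -> 0 < lam ->
    forall j, (1 <= j <= n)%nat ->
    exists C, forall (wd : list Z -> nat -> R) (l : list Z) (rhos : list (list Z)) (is : list nat),
      inA d A m lam (fun l' i => pos d A l' i + wd l' i) -> site d l ->
      length rhos = j -> Forall (nzsite d) rhos ->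
      length is = j -> Forall (fun i => (i < d)%nat) is ->
      Rabs (DV (combine rhos is) (Dw wd l)) <= C * SL_bound d A w rhos.

Definition SPS (V : G -> R) : Prop :=
  forall g : G, V (fun rho i => - g (zneg rho) i) = V g.

Definition const_outside_ball (d : nat) (A : nat -> nat -> R) (u : list Z -> nat -> R) : Prop :=
  exists (Rr : R) (c : nat -> R), forall l, site d l -> vnorm d (pos d A l) >= Rr ->
    forall i, (i < d)%nat -> u l i = c i.

(* unconditional summation over a countable index set given by a predicate *)
Definition summable_on {T : Type} (P : T -> Prop) (f : T -> R) : Prop :=
  exists M, forall l, NoDup l -> Forall P l -> rsuml (map (fun x => Rabs (f x)) l) <= M.
Definition has_sum {T : Type} (P : T -> Prop) (f : T -> R) (S : R) : Prop :=
  forall eps, 0 < eps -> exists l0, NoDup l0 /\ Forall P l0 /\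
    forall l, NoDup l -> Forall P l -> incl l0 l -> Rabs (rsuml (map f l) - S) < eps.

Definition fterm (d : nat) (DV : list (list Z * nat) -> G -> R) (u : list Z -> nat -> R)
    (l rho : list Z) : R :=
  rsum d (fun i => DV [(rho, i)] (fun _ _ => 0) * (u (zadd l rho) i - u l i)).

From Pilot Require Import Defs.
From Stdlib Require Import Reals ZArith List.
From Stdlib Require Import Lra Lia Permutation Classical FunctionalExtensionality RList.
Import ListNotations Defs.
Open Scope R_scope.

(* Write [u = c + v] with [v] finitely supported and [D_rho := V_{,rho}(0)]. By (S.L) with one
   derivative, [|D_rho| <= C w_1(|A rho|)]; as [w_1] is nonincreasing with a finite moment
   [int r^d w_1(r) dr], counting lattice points shell by shell gives [sum_rho |D_rho| < oo], and the
   compact support of [v] yields the l^1 bound. (S.PS) makes [D] odd, [D_(-rho) = - D_rho], so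
   [sum_rho D_rho = 0] unconditionally. Hence the inner sum at [l] is [sum_m D_(m - l) v(m)], and
   summing over [l] gives [sum_m v(m) sum_rho D_rho = 0]. *)

Lemma rsum_ext n f g : (forall i, (i < n)%nat -> f i = g i) -> rsum n f = rsum n g.
Proof.
  induction n; simpl; intros H; auto.
  rewrite IHn by (intros; apply H; lia). rewrite H by lia. reflexivity.
Qed.

Lemma rsum_le n f g : (forall i, (i < n)%nat -> f i <= g i) -> rsum n f <= rsum n g.
Proof.
  induction n; simpl; intros H; [lra|].
  assert (f n <= g n) by (apply H; lia).
  assert (rsum n f <= rsum n g) by (apply IHn; intros; apply H; lia). lra.
Qed.

Lemma rsum_const n a : rsum n (fun _ => a) = INR n * a.
Proof. induction n; simpl; [ring|]. rewrite IHn. destruct n; simpl; ring. Qed.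

Lemma rsum_zero n : rsum n (fun _ => 0) = 0.
Proof. rewrite rsum_const. ring. Qed.

Lemma rsum_nonneg n f : (forall i, (i < n)%nat -> 0 <= f i) -> 0 <= rsum n f.
Proof.
  intros H. rewrite <- (Rmult_0_r (INR n)), <- rsum_const. now apply rsum_le.
Qed.

Lemma rsum_plus n f g : rsum n (fun i => f i + g i) = rsum n f + rsum n g.
Proof. induction n; simpl; [lra|]. rewrite IHn; lra. Qed.

Lemma rsum_minus n f g : rsum n (fun i => f i - g i) = rsum n f - rsum n g.
Proof. induction n; simpl; [lra|]. rewrite IHn; lra. Qed.

Lemma rsum_scal n c f : rsum n (fun i => c * f i) = c * rsum n f.
Proof. induction n; simpl; [lra|]. rewrite IHn; lra. Qed.

Lemma rsum_abs n f : Rabs (rsum n f) <= rsum n (fun i => Rabs (f i)).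
Proof.
  induction n; simpl; [rewrite Rabs_R0; lra|].
  eapply Rle_trans; [apply Rabs_triang|lra].
Qed.

Lemma rsum_swap n m (f : nat -> nat -> R) :
  rsum n (fun i => rsum m (f i)) = rsum m (fun j => rsum n (fun i => f i j)).
Proof.
  induction n; simpl.
  - now rewrite rsum_zero.
  - rewrite IHn, <- rsum_plus. reflexivity.
Qed.

Lemma rsum_kronecker n f k : (k < n)%nat ->
  rsum n (fun j => (if Nat.eq_dec k j then 1 else 0) * f j) = f k.
Proof.
  induction n; intros Hk; [lia|]. simpl.
  destruct (Nat.eq_dec k n) as [<-|Hne].
  - rewrite (rsum_ext _ _ (fun _ => 0)), rsum_zero; [lra|].
    intros i Hi. destruct (Nat.eq_dec k i); [lia|lra].
  - rewrite IHn by lia. lra.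
Qed.

Lemma rsum_term_le n f k : (k < n)%nat -> (forall i, (i < n)%nat -> 0 <= f i) ->
  f k <= rsum n f.
Proof.
  induction n; intros Hk H; [lia|]. simpl.
  assert (0 <= f n) by (apply H; lia).
  destruct (Nat.eq_dec k n) as [->|Hne].
  - assert (0 <= rsum n f) by (apply rsum_nonneg; intros; apply H; lia). lra.
  - assert (f k <= rsum n f) by (apply IHn; [lia|intros; apply H; lia]). lra.
Qed.

Lemma rsum_indicator_le n m a : 0 <= a -> rsum n (fun k => if Nat.eq_dec k m then a else 0) <= a.
Proof.
  intros Ha. induction n; simpl; [lra|].
  destruct (Nat.eq_dec n m) as [->|]; [|lra].
  rewrite (rsum_ext _ _ (fun _ => 0)), rsum_zero; [lra|].
  intros i Hi. destruct (Nat.eq_dec i m); [lia|auto].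
Qed.

Section ListSums.
Context {T : Type}.
Implicit Types (f g : T -> R) (l : list T).

Lemma rsuml_app (l1 l2 : list R) : rsuml (l1 ++ l2) = rsuml l1 + rsuml l2.
Proof. induction l1; simpl; [lra|]. rewrite IHl1; lra. Qed.

Lemma rsuml_map_ext f g l : (forall x, In x l -> f x = g x) -> rsuml (map f l) = rsuml (map g l).
Proof. induction l; simpl; intros H; auto. rewrite H, IHl; auto. Qed.

Lemma rsuml_map_le f g l : (forall x, In x l -> f x <= g x) -> rsuml (map f l) <= rsuml (map g l).
Proof.
  induction l; simpl; intros H; [lra|].
  assert (f a <= g a) by auto. assert (rsuml (map f l) <= rsuml (map g l)) by auto. lra.
Qed.

Lemma rsuml_const l a : rsuml (map (fun _ => a) l) = INR (length l) * a.
Proof. induction l; simpl; [ring|]. rewrite IHl. destruct (length l); simpl; ring. Qed.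

Lemma rsuml_map_nonneg f l : (forall x, In x l -> 0 <= f x) -> 0 <= rsuml (map f l).
Proof. intros H. rewrite <- (Rmult_0_r (INR (length l))), <- rsuml_const. now apply rsuml_map_le. Qed.

Lemma rsuml_map_zero f l : (forall x, In x l -> f x = 0) -> rsuml (map f l) = 0.
Proof. intros H. rewrite (rsuml_map_ext _ (fun _ => 0)), rsuml_const; auto; ring. Qed.

Lemma rsuml_perm f l1 l2 : Permutation l1 l2 -> rsuml (map f l1) = rsuml (map f l2).
Proof. induction 1; simpl; lra. Qed.

Lemma rsuml_plus f g l : rsuml (map (fun x => f x + g x) l) = rsuml (map f l) + rsuml (map g l).
Proof. induction l; simpl; [lra|]. rewrite IHl; lra. Qed.

Lemma rsuml_minus f g l : rsuml (map (fun x => f x - g x) l) = rsuml (map f l) - rsuml (map g l).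
Proof. induction l; simpl; [lra|]. rewrite IHl; lra. Qed.

Lemma rsuml_scal c f l : rsuml (map (fun x => c * f x) l) = c * rsuml (map f l).
Proof. induction l; simpl; [lra|]. rewrite IHl; lra. Qed.

Lemma rsuml_opp f l : rsuml (map (fun x => - f x) l) = - rsuml (map f l).
Proof. induction l; simpl; [lra|]. rewrite IHl; lra. Qed.

Lemma rsuml_abs f l : Rabs (rsuml (map f l)) <= rsuml (map (fun x => Rabs (f x)) l).
Proof.
  induction l; simpl; [rewrite Rabs_R0; lra|].
  eapply Rle_trans; [apply Rabs_triang|lra].
Qed.

Lemma rsuml_rsum n (f : T -> nat -> R) l :
  rsuml (map (fun x => rsum n (f x)) l) = rsum n (fun i => rsuml (map (fun x => f x i) l)).
Proof.
  induction l; simpl.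
  - now rewrite rsum_zero.
  - rewrite IHl, <- rsum_plus. reflexivity.
Qed.

Lemma rsuml_filter (p : T -> bool) f l :
  rsuml (map f (filter p l)) = rsuml (map (fun x => if p x then f x else 0) l).
Proof. induction l; simpl; auto. destruct (p a); simpl; rewrite IHl; lra. Qed.

Lemma rsuml_split (p : T -> bool) f l :
  rsuml (map f l) = rsuml (map f (filter p l)) + rsuml (map f (filter (fun x => negb (p x)) l)).
Proof.
  rewrite !rsuml_filter, <- rsuml_plus. apply rsuml_map_ext. intros x _. destruct (p x); simpl; ring.
Qed.

Lemma rsuml_term_le f l x : In x l -> (forall y, In y l -> 0 <= f y) -> f x <= rsuml (map f l).
Proof.
  induction l; simpl; intros Hx H; [tauto|]. destruct Hx as [<-|Hx].
  - assert (0 <= rsuml (map f l)) by (apply rsuml_map_nonneg; auto). lra.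
  - assert (f x <= rsuml (map f l)) by auto. assert (0 <= f a) by auto. lra.
Qed.

Lemma rsuml_support (dec : forall x y : T, {x = y} + {x <> y}) g P Q :
  NoDup P -> NoDup Q -> incl Q P -> (forall x, In x P -> ~ In x Q -> g x = 0) ->
  rsuml (map g P) = rsuml (map g Q).
Proof.
  intros HP HQ HI Hz. set (inQ := fun x => if in_dec dec x Q then true else false).
  rewrite (rsuml_split inQ), (rsuml_map_zero g (filter (fun x => negb (inQ x)) P)), Rplus_0_r.
  - apply rsuml_perm, NoDup_Permutation; [now apply NoDup_filter|auto|].
    intros x. rewrite filter_In. unfold inQ. destruct (in_dec dec x Q).
    + split; [tauto|auto].
    + split; [intros [_ H]; discriminate|tauto].
  - intros x Hx. apply filter_In in Hx. unfold inQ in Hx.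
    destruct (in_dec dec x Q); simpl in Hx; [easy|]. now apply Hz.
Qed.

End ListSums.

Lemma rsuml_seq n (f : nat -> R) : rsuml (map f (seq 0 n)) = rsum n f.
Proof. induction n; [reflexivity|]. cbn [rsum]. rewrite seq_S, map_app, rsuml_app, IHn. simpl. ring. Qed.

Lemma rsuml_swap {T U} (f : T -> U -> R) l (m : list U) :
  rsuml (map (fun x => rsuml (map (f x) m)) l) = rsuml (map (fun y => rsuml (map (fun x => f x y) l)) m).
Proof.
  induction l; [symmetry; now apply (rsuml_map_zero _ m)|].
  simpl. rewrite IHl, <- rsuml_plus. reflexivity.
Qed.

Lemma rsuml_group {T U} (decU : forall x y : U, {x = y} + {x <> y}) (key : T -> U) F L M :
  (forall x, In x L -> 0 <= F x) -> (forall x, In x L -> ~ In (key x) M -> F x = 0) ->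
  rsuml (map F L) <=
  rsuml (map (fun m => rsuml (map F (filter (fun x => if decU (key x) m then true else false) L))) M).
Proof.
  induction L as [|a L IH]; intros H0 Hz; simpl; [rewrite rsuml_map_zero; auto; lra|].
  rewrite (rsuml_map_ext _ (fun m => (if decU (key a) m then F a else 0) +
        rsuml (map F (filter (fun x => if decU (key x) m then true else false) L))))
    by (intros m _; destruct (decU (key a) m); simpl; lra).
  rewrite rsuml_plus.
  assert (rsuml (map F L) <= rsuml (map (fun m => rsuml (map F
            (filter (fun x => if decU (key x) m then true else false) L))) M))
    by (apply IH; intros; [apply H0|apply Hz]; simpl; auto).
  assert (F a <= rsuml (map (fun m => if decU (key a) m then F a else 0) M)).
  { destruct (in_dec decU (key a) M) as [Hin|Hout].
    - assert (Ht := rsuml_term_le (fun m => if decU (key a) m then F a else 0) M (key a) Hin).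
      simpl in Ht. destruct (decU (key a) (key a)); [|congruence]. apply Ht.
      intros y _. destruct (decU (key a) y); [apply H0; simpl; auto|lra].
    - rewrite Hz by (simpl; auto). apply rsuml_map_nonneg. intros y _. destruct (decU (key a) y); lra. }
  lra.
Qed.

Lemma NoDup_map_on {T U} (f : T -> U) l : NoDup l ->
  (forall x y, In x l -> In y l -> f x = f y -> x = y) -> NoDup (map f l).
Proof.
  induction l; simpl; intros H Hi; constructor; inversion H; subst.
  - intros Hin. apply in_map_iff in Hin. destruct Hin as [y [Hy Hy']].
    assert (y = a) by (apply Hi; auto). subst. tauto.
  - apply IHl; auto.
Qed.

Notation zvec_eq_dec := (list_eq_dec Z.eq_dec).

Definition zsub (m l : list Z) : list Z := zadd m (zneg l).

Lemma zadd_length k l : length (zadd k l) = Nat.min (length k) (length l).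
Proof. revert l; induction k; destruct l; simpl; auto. Qed.

Lemma zadd_comm k l : zadd k l = zadd l k.
Proof. revert l; induction k; destruct l; simpl; auto. now rewrite IHk, Z.add_comm. Qed.

Lemma zadd_assoc a b c : zadd (zadd a b) c = zadd a (zadd b c).
Proof. revert b c; induction a; destruct b, c; simpl; auto. now rewrite IHa, Z.add_assoc. Qed.

Lemma zadd_zero k : zadd k (zero_site (length k)) = k.
Proof. unfold zero_site; induction k; simpl; auto. now rewrite IHk, Z.add_0_r. Qed.

Lemma zadd_zneg k : zadd k (zneg k) = zero_site (length k).
Proof. unfold zero_site; induction k; simpl; auto. now rewrite IHk, Z.add_opp_diag_r. Qed.

Lemma zneg_length k : length (zneg k) = length k.
Proof. apply length_map. Qed.

Lemma zneg_involutive k : zneg (zneg k) = k.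
Proof. unfold zneg. rewrite map_map. induction k; simpl; auto. now rewrite IHk, Z.opp_involutive. Qed.

Lemma zneg_zadd a b : zneg (zadd a b) = zadd (zneg a) (zneg b).
Proof. revert b; induction a; destruct b; simpl; auto. unfold zneg in *. simpl. now rewrite IHa, Z.opp_add_distr. Qed.

Lemma zneg_zero d : zneg (zero_site d) = zero_site d.
Proof. unfold zneg, zero_site. induction d; simpl; auto. now rewrite IHd. Qed.

Lemma zero_site_length d : length (zero_site d) = d.
Proof. apply repeat_length. Qed.

Lemma zadd_zsub l m : length l = length m -> zadd l (zsub m l) = m.
Proof.
  intros H. unfold zsub.
  now rewrite zadd_comm, zadd_assoc, (zadd_comm (zneg l)), zadd_zneg, H, zadd_zero.
Qed.

Lemma zsub_zadd l r : length l = length r -> zsub (zadd l r) l = r.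
Proof. intros H. unfold zsub. now rewrite (zadd_comm l), zadd_assoc, zadd_zneg, H, zadd_zero. Qed.

Lemma zsub_involutive m r : length m = length r -> zsub m (zsub m r) = r.
Proof.
  intros H. unfold zsub.
  now rewrite zneg_zadd, zneg_involutive, <- zadd_assoc, zadd_zneg, zadd_comm, H, zadd_zero.
Qed.

Lemma zsub_length m l : length m = length l -> length (zsub m l) = length m.
Proof. intros. unfold zsub. rewrite zadd_length, zneg_length. lia. Qed.

Lemma zsub_diag m : zsub m m = zero_site (length m).
Proof. apply zadd_zneg. Qed.

Lemma zsub_inj m a b : length m = length a -> length m = length b -> zsub m a = zsub m b -> a = b.
Proof. intros Ha Hb H. now rewrite <- (zsub_involutive m a), <- (zsub_involutive m b), H. Qed.

Lemma zsub_neq0 m l : length m = length l -> l <> m -> zsub m l <> zero_site (length m).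
Proof. intros H Hne E. apply Hne. now rewrite <- (zadd_zsub l m), E, H, zadd_zero. Qed.

Lemma site_zadd d a b : site d a -> site d b -> site d (zadd a b).
Proof. unfold site; intros. rewrite zadd_length; lia. Qed.

Lemma site_zsub d a b : site d a -> site d b -> site d (zsub a b).
Proof. unfold site; intros. rewrite zsub_length; lia. Qed.

Lemma nzsite_zneg d r : nzsite d r -> nzsite d (zneg r).
Proof.
  intros [Hs Hn]. split; [unfold site in *; now rewrite zneg_length|].
  intros E. apply Hn. now rewrite <- (zneg_involutive r), E, zneg_zero.
Qed.

Lemma nzsite_zsub d m l : site d m -> site d l -> l <> m -> nzsite d (zsub m l).
Proof.
  intros Hm Hl Hne. split; [now apply site_zsub|].
  unfold site in *. rewrite <- Hm. apply zsub_neq0; [lia|auto].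
Qed.

Definition zinterval (k : nat) : list Z :=
  map (fun i => (Z.of_nat i - Z.of_nat k)%Z) (seq 0 (2 * k + 1)).

Fixpoint cube (d k : nat) : list (list Z) :=
  match d with
  | O => [nil]
  | S d' => flat_map (fun z => map (cons z) (cube d' k)) (zinterval k)
  end.

Definition supnorm (r : list Z) : nat := fold_right (fun z m => Nat.max (Z.abs_nat z) m) O r.

Lemma In_zinterval k z : (Z.abs z <= Z.of_nat k)%Z -> In z (zinterval k).
Proof.
  intros H. apply in_map_iff. exists (Z.to_nat (z + Z.of_nat k)).
  split; [rewrite Z2Nat.id; lia|]. apply in_seq. lia.
Qed.

Lemma cube_length d k : length (cube d k) = Nat.pow (2 * k + 1) d.
Proof.
  assert (Hfl : forall (l : list Z) L, length (flat_map (fun z => map (cons z) L) l) = (length l * length L)%nat).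
  { induction l; intros; simpl; auto. now rewrite length_app, length_map, IHl. }
  induction d; simpl; auto. now rewrite Hfl, IHd; unfold zinterval; rewrite length_map, length_seq.
Qed.

Lemma In_cube d k r : site d r -> (supnorm r <= k)%nat -> In r (cube d k).
Proof.
  unfold supnorm; revert r; induction d; intros [|z r] Hs Hn; simpl in *; try discriminate; auto.
  unfold site in Hs; simpl in Hs. apply in_flat_map. exists z. split.
  - apply In_zinterval. lia.
  - apply in_map, IHd; [unfold site; lia|lia].
Qed.

Lemma cube_site d k r : In r (cube d k) -> site d r.
Proof.
  unfold site. revert r; induction d; simpl; intros r H; [now destruct H as [<-|[]]|].
  apply in_flat_map in H. destruct H as [z [_ H]]. apply in_map_iff in H. destruct H as [r' [<- H]].
  simpl. f_equal. auto.
Qed.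

Lemma supnorm_nzsite d r : nzsite d r -> (1 <= supnorm r)%nat.
Proof.
  intros [Hs Hn]. destruct (supnorm r) eqn:E; [|lia]. exfalso. apply Hn.
  clear Hn. unfold supnorm in E; revert r Hs E; induction d; intros [|z r] Hs E; try discriminate; auto.
  unfold site in Hs; simpl in *. replace z with 0%Z by lia.
  change (zero_site (S d)) with (0%Z :: zero_site d). f_equal. apply IHd; [unfold site|]; lia.
Qed.

Lemma supnorm_attained r : r <> nil -> exists j, (j < length r)%nat /\ Z.abs_nat (nth j r 0%Z) = supnorm r.
Proof.
  induction r as [|a r IH]; intros H; [congruence|]. destruct r as [|b r].
  - exists O. simpl. split; [lia|]. cbn. lia.
  - destruct IH as [j [Hj Hj']]; [discriminate|].
    change (supnorm (a :: b :: r)) with (Nat.max (Z.abs_nat a) (supnorm (b :: r))).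
    destruct (Nat.le_ge_cases (Z.abs_nat a) (supnorm (b :: r))).
    + exists (S j). split; [simpl in *; lia|].
      change (nth (S j) (a :: b :: r) 0%Z) with (nth j (b :: r) 0%Z). lia.
    + exists O. split; [simpl; lia|]. simpl nth. lia.
Qed.

(** * The lattice [A Z^d] *)

Lemma vnorm_nonneg d v : 0 <= vnorm d v.
Proof. apply sqrt_pos. Qed.

Lemma vnorm_ext d v w : (forall i, (i < d)%nat -> v i = w i) -> vnorm d v = vnorm d w.
Proof. intros H. unfold vnorm. f_equal. apply rsum_ext. intros i Hi. now rewrite H. Qed.

Lemma vnorm_ge_abs d v i : (i < d)%nat -> Rabs (v i) <= vnorm d v.
Proof.
  intros Hi. unfold vnorm. rewrite <- sqrt_Rsqr_abs. apply sqrt_le_1_alt.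
  unfold Rsqr. replace (v i * v i) with (v i ^ 2) by ring.
  apply (rsum_term_le d (fun j => v j ^ 2)); auto. intros. apply pow2_ge_0.
Qed.

Lemma vnorm_le_l1 d v : vnorm d v <= rsum d (fun i => Rabs (v i)).
Proof.
  assert (Hsq : rsum d (fun i => v i ^ 2) <= rsum d (fun i => Rabs (v i)) ^ 2).
  { induction d; cbn [rsum]; [simpl; lra|].
    assert (0 <= rsum d (fun i => Rabs (v i))) by (apply rsum_nonneg; intros; apply Rabs_pos).
    rewrite <- (pow2_abs (v d)). assert (0 <= Rabs (v d)) by apply Rabs_pos. nra. }
  unfold vnorm. rewrite <- (sqrt_pow2 (rsum d (fun i => Rabs (v i)))).
  - now apply sqrt_le_1_alt.
  - apply rsum_nonneg; intros; apply Rabs_pos.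
Qed.

Definition matrix_inverse d (A B : nat -> nat -> R) : Prop :=
  (forall i k, (i < d)%nat -> (k < d)%nat ->
     rsum d (fun j => A i j * B j k) = if Nat.eq_dec i k then 1 else 0) /\
  (forall i k, (i < d)%nat -> (k < d)%nat ->
     rsum d (fun j => B i j * A j k) = if Nat.eq_dec i k then 1 else 0).

Lemma nonsingular2_kernel A : nonsingular 2 A -> forall v0 v1,
  A 0%nat 0%nat * v0 + A 0%nat 1%nat * v1 = 0 ->
  A 1%nat 0%nat * v0 + A 1%nat 1%nat * v1 = 0 -> v0 = 0 /\ v1 = 0.
Proof.
  intros H v0 v1 E0 E1.
  assert (HH := H (fun j => match j with O => v0 | _ => v1 end)
                  ltac:(intros [|[|i]] Hi; simpl; lra || lia)).
  split; [apply (HH 0%nat)|apply (HH 1%nat)]; lia.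
Qed.

Lemma nonsingular3_kernel A : nonsingular 3 A -> forall v0 v1 v2,
  A 0%nat 0%nat * v0 + A 0%nat 1%nat * v1 + A 0%nat 2%nat * v2 = 0 ->
  A 1%nat 0%nat * v0 + A 1%nat 1%nat * v1 + A 1%nat 2%nat * v2 = 0 ->
  A 2%nat 0%nat * v0 + A 2%nat 1%nat * v1 + A 2%nat 2%nat * v2 = 0 -> v0 = 0 /\ v1 = 0 /\ v2 = 0.
Proof.
  intros H v0 v1 v2 E0 E1 E2.
  assert (HH := H (fun j => match j with O => v0 | 1%nat => v1 | _ => v2 end)
                  ltac:(intros [|[|[|i]]] Hi; simpl; lra || lia)).
  split; [|split]; [apply (HH 0%nat)|apply (HH 1%nat)|apply (HH 2%nat)]; lia.
Qed.

Lemma nonsingular2_inverse A : nonsingular 2 A -> exists B, matrix_inverse 2 A B.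
Proof.
  intros H. set (det := A 0%nat 0%nat * A 1%nat 1%nat - A 0%nat 1%nat * A 1%nat 0%nat).
  assert (Hdet : det <> 0).
  { intros E. unfold det in E.
    destruct (nonsingular2_kernel A H (A 0%nat 1%nat) (- A 0%nat 0%nat)); [lra|lra|].
    destruct (nonsingular2_kernel A H (A 1%nat 1%nat) (- A 1%nat 0%nat)); [lra|lra|].
    destruct (nonsingular2_kernel A H 1 0); lra. }
  exists (fun j k => match j, k with
    | O, O => A 1%nat 1%nat / det | O, 1 => - A 0%nat 1%nat / det
    | 1, O => - A 1%nat 0%nat / det | 1, 1 => A 0%nat 0%nat / det
    | _, _ => 0 end).
  split; intros [|[|i]] [|[|k]] Hi Hk; try lia; simpl; unfold det in *; field; auto.
Qed.

Definition cofactor3 (A : nat -> nat -> R) (i j : nat) : R :=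
  let s k := Nat.modulo k 3 in
  A (s (i + 1)%nat) (s (j + 1)%nat) * A (s (i + 2)%nat) (s (j + 2)%nat) -
  A (s (i + 1)%nat) (s (j + 2)%nat) * A (s (i + 2)%nat) (s (j + 1)%nat).

Lemma nonsingular3_det A : nonsingular 3 A ->
  A 0%nat 0%nat * cofactor3 A 0 0 + A 0%nat 1%nat * cofactor3 A 0 1 + A 0%nat 2%nat * cofactor3 A 0 2 <> 0.
Proof.
  intros H E. unfold cofactor3 in E; simpl in E.
  (* A singular matrix kills every row of cofactors, hence all its 2x2 minors vanish. *)
  assert (Hcof : forall k, (k < 3)%nat ->
            cofactor3 A k 0 = 0 /\ cofactor3 A k 1 = 0 /\ cofactor3 A k 2 = 0).
  { intros k Hk. apply (nonsingular3_kernel A); auto;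
      destruct k as [|[|[|k]]]; try lia; unfold cofactor3; simpl; lra. }
  destruct (Hcof 0%nat) as [C00 [C01 C02]]; [lia|].
  destruct (Hcof 1%nat) as [C10 [C11 C12]]; [lia|].
  destruct (Hcof 2%nat) as [C20 [C21 C22]]; [lia|].
  unfold cofactor3 in *; simpl in *.
  assert (Hrow : forall a, (a < 3)%nat -> A a 0%nat = 0 /\ A a 1%nat = 0 /\ A a 2%nat = 0).
  { intros a Ha.
    destruct (nonsingular3_kernel A H 0 (A a 2%nat) (- A a 1%nat)) as [_ [Z1 Z2]];
      [destruct a as [|[|[|a]]]; try lia; simpl; lra ..|].
    destruct (nonsingular3_kernel A H (- A a 2%nat) 0 (A a 0%nat)) as [_ [_ Z3]];
      [destruct a as [|[|[|a]]]; try lia; simpl; lra ..|].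
    lra. }
  destruct (Hrow 0%nat) as [a00 [a01 a02]]; [lia|].
  destruct (Hrow 1%nat) as [a10 [a11 a12]]; [lia|].
  destruct (Hrow 2%nat) as [a20 [a21 a22]]; [lia|].
  destruct (nonsingular3_kernel A H 1 0 0) as [Z _];
    [rewrite a00, a01, a02|rewrite a10, a11, a12|rewrite a20, a21, a22|]; lra.
Qed.

Lemma nonsingular3_inverse A : nonsingular 3 A -> exists B, matrix_inverse 3 A B.
Proof.
  intros H. assert (Hdet := nonsingular3_det A H).
  exists (fun j k => cofactor3 A k j /
    (A 0%nat 0%nat * cofactor3 A 0 0 + A 0%nat 1%nat * cofactor3 A 0 1 + A 0%nat 2%nat * cofactor3 A 0 2)).
  split; intros [|[|[|i]]] [|[|[|k]]] Hi Hk; try lia; simpl;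
    unfold cofactor3 in *; simpl in *; field; auto.
Qed.

(* This is the only place where [d] is restricted to 2 or 3. *)
Lemma nonsingular_inverse d A : (d = 2%nat \/ d = 3%nat) -> nonsingular d A ->
  exists B, matrix_inverse d A B.
Proof. intros [-> | ->]; [apply nonsingular2_inverse|apply nonsingular3_inverse]. Qed.

Section Lattice.
Variables (d : nat) (A B : nat -> nat -> R).
Hypothesis HAB : matrix_inverse d A B.

Lemma pos_coordinates r j : site d r -> (j < d)%nat ->
  rsum d (fun k => B j k * pos d A r k) = IZR (nth j r 0%Z).
Proof.
  intros Hs Hj. unfold pos.
  rewrite (rsum_ext _ _ (fun k => rsum d (fun m => B j k * A k m * IZR (nth m r 0%Z)))).
  2:{ intros k Hk. rewrite <- rsum_scal. apply rsum_ext. intros; ring. }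
  rewrite rsum_swap, <- (rsum_kronecker d (fun m => IZR (nth m r 0%Z)) j Hj).
  apply rsum_ext. intros m Hm. rewrite <- (proj2 HAB) by auto.
  rewrite Rmult_comm, <- rsum_scal. apply rsum_ext; intros; ring.
Qed.

Lemma supnorm_le_pos : exists K, 0 < K /\
  forall r, site d r -> INR (supnorm r) <= K * vnorm d (pos d A r).
Proof.
  set (s := rsum d (fun j => rsum d (fun k => Rabs (B j k)))).
  assert (Hs0 : 0 <= s) by (apply rsum_nonneg; intros; apply rsum_nonneg; intros; apply Rabs_pos).
  exists (s + 1). split; [lra|]. intros r Hr.
  assert (Hv := vnorm_nonneg d (pos d A r)).
  destruct r as [|z r'] eqn:Er; [cbn; nra|]. rewrite <- Er in *.
  destruct (supnorm_attained r) as [j [Hj <-]]; [congruence|].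
  unfold site in Hr. rewrite Hr in Hj.
  assert (Hrow : rsum d (fun k => Rabs (B j k)) <= s).
  { apply (rsum_term_le d (fun j => rsum d (fun k => Rabs (B j k)))); auto.
    intros; apply rsum_nonneg; intros; apply Rabs_pos. }
  rewrite INR_IZR_INZ, Zabs2Nat.id_abs, abs_IZR, <- pos_coordinates by auto.
  eapply Rle_trans; [apply rsum_abs|].
  apply Rle_trans with (rsum d (fun k => vnorm d (pos d A r) * Rabs (B j k))).
  - apply rsum_le. intros k Hk. rewrite Rabs_mult.
    assert (Rabs (pos d A r k) <= vnorm d (pos d A r)) by now apply vnorm_ge_abs.
    assert (0 <= Rabs (B j k)) by apply Rabs_pos. nra.
  - rewrite rsum_scal. nra.
Qed.

Lemma pos_covering : exists lam, 0 < lam /\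
  forall z : nat -> R, exists l, site d l /\ vnorm d (fun i => pos d A l i - z i) < lam.
Proof.
  set (a := rsum d (fun i => rsum d (fun j => Rabs (A i j)))).
  assert (Ha0 : 0 <= a) by (apply rsum_nonneg; intros; apply rsum_nonneg; intros; apply Rabs_pos).
  exists (a + 1). split; [lra|]. intros z.
  set (x := fun j => rsum d (fun k => B j k * z k)).
  set (l := map (fun j => up (x j)) (seq 0 d)).
  assert (Hl : forall j, (j < d)%nat -> nth j l 0%Z = up (x j)).
  { intros j Hj. unfold l. rewrite (nth_indep _ 0%Z (up (x 0%nat))) by (now rewrite length_map, length_seq).
    change (up (x 0%nat)) with ((fun j => up (x j)) 0%nat). now rewrite map_nth, seq_nth. }
  exists l. split; [unfold site, l; now rewrite length_map, length_seq|].
  eapply Rle_lt_trans; [apply vnorm_le_l1|]. apply Rle_lt_trans with a; [|lra].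
  apply rsum_le. intros i Hi.
  assert (Hz : rsum d (fun j => A i j * x j) = z i).
  { unfold x. rewrite (rsum_ext _ _ (fun j => rsum d (fun k => A i j * B j k * z k))).
    2:{ intros j Hj. rewrite <- rsum_scal. apply rsum_ext; intros; ring. }
    rewrite rsum_swap, <- (rsum_kronecker d z i Hi).
    apply rsum_ext. intros k Hk. rewrite <- (proj1 HAB) by auto.
    rewrite Rmult_comm, <- rsum_scal. apply rsum_ext; intros; ring. }
  assert (E : pos d A l i - z i = rsum d (fun j => A i j * (IZR (up (x j)) - x j))).
  { unfold pos. rewrite <- Hz, <- rsum_minus. apply rsum_ext. intros j Hj. rewrite Hl by auto. ring. }
  rewrite E. eapply Rle_trans; [apply rsum_abs|]. apply rsum_le. intros j Hj.
  rewrite Rabs_mult. destruct (archimed (x j)) as [H1 H2].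
  rewrite (Rabs_right (IZR (up (x j)) - x j)) by lra.
  assert (0 <= Rabs (A i j)) by apply Rabs_pos. nra.
Qed.

End Lattice.

(** * Lattice sums of a radial weight in [L_1] *)

Fixpoint equi_points (N : nat) (a h : R) : list R :=
  match N with O => [a] | S N' => a :: equi_points N' (a + h) h end.

Fixpoint equi_values (v : R -> R) (N : nat) (a h : R) : list R :=
  match N with O => [] | S N' => v a :: equi_values v N' (a + h) h end.

Fixpoint equi_step (v c : R -> R) (N : nat) (a h t : R) : R :=
  match N with
  | O => c a
  | S N' => if Rlt_dec t (a + h) then v a else equi_step v c N' (a + h) h t
  end.

Lemma equi_points_nth N a h i : (i <= N)%nat -> pos_Rl (equi_points N a h) i = a + INR i * h.
Proof.
  revert a i; induction N; intros a [|i] Hi; cbn [equi_points pos_Rl]; try (simpl; ring); [lia|].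
  rewrite IHN, S_INR by lia. ring.
Qed.

Lemma equi_values_nth v N a h i : (i < N)%nat -> pos_Rl (equi_values v N a h) i = v (a + INR i * h).
Proof.
  revert a i; induction N; intros a [|i] Hi; try lia; cbn [equi_values pos_Rl]; [f_equal; simpl; ring|].
  rewrite IHN, S_INR by lia. f_equal; ring.
Qed.

Lemma equi_step_on v c N a h i t : 0 < h -> (i < N)%nat ->
  a + INR i * h < t < a + INR (S i) * h -> equi_step v c N a h t = v (a + INR i * h).
Proof.
  revert a i; induction N; intros a [|i] Hh Hi Ht; try lia; cbn [equi_step].
  - change (INR 0) with 0 in *. change (INR 1) with 1 in Ht.
    destruct (Rlt_dec t (a + h)); [f_equal; ring|lra].
  - rewrite !S_INR in Ht. assert (0 <= INR i) by apply pos_INR.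
    destruct (Rlt_dec t (a + h)); [nra|].
    rewrite (IHN (a + h) i); [f_equal; rewrite S_INR; ring|lra|lia|rewrite S_INR; lra].
Qed.

Lemma equi_step_adapted v c N a h b : 0 < h -> b = a + INR N * h ->
  adapted_couple (equi_step v c N a h) a b (equi_points N a h) (equi_values v N a h).
Proof.
  intros Hh Hb. assert (0 <= INR N) by apply pos_INR.
  assert (Hab : a <= b) by nra.
  assert (Hlen : forall x, length (equi_points N x h) = S N)
    by (clear; induction N; intros; simpl; auto).
  assert (Hlen' : length (equi_values v N a h) = N) by (clear; revert a; induction N; intros; simpl; auto).
  unfold adapted_couple. rewrite Hlen, Hlen'. simpl pred. repeat split.
  - intros i Hi. rewrite Hlen in Hi. simpl in Hi. rewrite !equi_points_nth, S_INR by lia. lra.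
  - rewrite Rmin_left, equi_points_nth by (auto || lia). simpl; ring.
  - rewrite Rmax_right, equi_points_nth by (auto || lia). auto.
  - intros i Hi t Ht. unfold open_interval in Ht. rewrite !equi_points_nth in Ht by lia.
    rewrite equi_values_nth by lia. now apply equi_step_on.
Qed.

Definition equi_StepFun (v c : R -> R) (N : nat) (a h b : R) (Hh : 0 < h) (Hb : b = a + INR N * h)
  : StepFun a b :=
  mkStepFun (existT _ (equi_points N a h)
    (existT _ (equi_values v N a h) (equi_step_adapted v c N a h b Hh Hb))).

Lemma Int_SF_telescope f N a h :
  Int_SF (equi_values (fun x => f x - f (x + h)) N a h) (equi_points N a h) =
  h * (f a - f (a + INR N * h)).
Proof.
  revert a; induction N as [|N IH]; intros a.
  { change (INR 0) with 0. rewrite Rmult_0_l, Rplus_0_r, Rminus_diag. simpl; ring. }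
  destruct N as [|N]; [change (INR 1) with 1; rewrite Rmult_1_l; simpl; ring|].
  change (Int_SF (equi_values (fun x => f x - f (x + h)) (S (S N)) a h) (equi_points (S (S N)) a h))
    with ((f a - f (a + h)) * (a + h - a) +
          Int_SF (equi_values (fun x => f x - f (x + h)) (S N) (a + h) h) (equi_points (S N) (a + h) h)).
  rewrite IH, (S_INR (S N)).
  replace (a + h + INR (S N) * h) with (a + (INR (S N) + 1) * h) by ring. ring.
Qed.

Lemma equi_step_approx f N a h t : 0 < h ->
  (forall r s, a <= r -> r <= s -> s <= a + INR N * h -> f s <= f r) ->
  a <= t <= a + INR N * h ->
  Rabs (f t - equi_step f f N a h t) <= equi_step (fun x => f x - f (x + h)) (fun _ => 0) N a h t.
Proof.
  revert a; induction N; intros a Hh Hm Ht; cbn [equi_step].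
  - change (INR 0) with 0 in Ht. replace t with a by lra. rewrite Rminus_diag, Rabs_R0. lra.
  - rewrite S_INR in *. assert (0 <= INR N) by apply pos_INR.
    destruct (Rlt_dec t (a + h)).
    + assert (f t <= f a) by (apply Hm; nra). assert (f (a + h) <= f t) by (apply Hm; nra).
      rewrite Rabs_left1 by lra. lra.
    + apply IHN; [auto| |lra]. intros r s Hr Hrs Hs. apply Hm; lra.
Qed.

Lemma nonincreasing_Riemann_integrable f a b : a <= b ->
  (forall r s, a <= r -> r <= s -> s <= b -> f s <= f r) -> Riemann_integrable f a b.
Proof.
  intros Hab Hm. destruct (Req_EM_T a b) as [<-|Hne]; [apply RiemannInt_P7|]. intros eps.
  (* With [N] equal steps of width [h], the oscillation telescopes to [h (f a - f b)]. *)
  set (K := (b - a) * (f a - f b) / eps).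
  set (N := S (Z.to_nat (up K))).
  assert (HN : K < INR N).
  { assert (IZR (up K) <= INR (Z.to_nat (up K))).
    { destruct (up K) as [|p|p]; [simpl; lra|rewrite INR_IZR_INZ, Z2Nat.id by lia; lra|].
      rewrite Z2Nat.inj_neg. apply IZR_le. lia. }
    unfold N. rewrite S_INR. destruct (archimed K). lra. }
  assert (HN0 : 0 < INR N) by (apply lt_0_INR; unfold N; lia).
  set (h := (b - a) / INR N).
  assert (Hh : 0 < h) by (apply Rdiv_lt_0_compat; lra).
  assert (Hb : b = a + INR N * h) by (unfold h; field; lra).
  exists (equi_StepFun f f N a h b Hh Hb).
  exists (equi_StepFun (fun x => f x - f (x + h)) (fun _ => 0) N a h b Hh Hb). split.
  - intros t Ht. rewrite Rmin_left, Rmax_right in Ht by lra.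
    unfold equi_StepFun; cbn [fe]. apply equi_step_approx; try rewrite <- Hb; auto.
  - unfold RiemannInt_SF. destruct (Rle_dec a b); [|lra].
    unfold subdivision_val, subdivision, equi_StepFun; cbn [projT1 projT2 pre].
    rewrite Int_SF_telescope, <- Hb.
    assert (f b <= f a) by (apply Hm; lra). assert (Heps := cond_pos eps).
    rewrite Rabs_right by (apply Rle_ge, Rmult_le_pos; lra).
    apply Rmult_lt_reg_r with (INR N); auto. unfold h.
    replace ((b - a) / INR N * (f a - f b) * INR N) with (K * eps) by (unfold K; field; lra).
    nra.
Qed.

Section RadialSum.
Variables (w : R -> R) (d : nat).
Hypothesis w_nonincreasing : forall r s, 0 <= r -> r <= s -> w s <= w r.
Hypothesis w_pos : forall r, 0 <= r -> 0 < w r.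

Lemma pow_weight_integrable b : 0 <= b -> Riemann_integrable (fun r => r ^ d * w r) 0 b.
Proof.
  intros Hb.
  (* [r^d w r] is the difference of two nonincreasing functions. *)
  assert (I1 : Riemann_integrable (fun r => b ^ d * w r) 0 b).
  { apply nonincreasing_Riemann_integrable; auto. intros r s Hr Hrs Hs.
    apply Rmult_le_compat_l; [apply pow_le; auto|apply w_nonincreasing; lra]. }
  assert (I2 : Riemann_integrable (fun r => (b ^ d - r ^ d) * w r) 0 b).
  { apply nonincreasing_Riemann_integrable; auto. intros r s Hr Hrs Hs.
    assert (r ^ d <= s ^ d) by (apply pow_incr; lra). assert (s ^ d <= b ^ d) by (apply pow_incr; lra).
    apply Rmult_le_compat; try lra; [left; apply w_pos; lra|apply w_nonincreasing; lra]. }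
  apply (Riemann_integrable_ext (f := fun r => b ^ d * w r + (-1) * ((b ^ d - r ^ d) * w r))).
  - intros; ring.
  - now apply RiemannInt_P10.
Qed.

Variable c : R.
Hypothesis c_pos : 0 < c.

Lemma grid_nonneg k : 0 <= c * INR k.
Proof. apply Rmult_le_pos; [lra|apply pos_INR]. Qed.

(* A lower Riemann sum of [r^d w r] on the grid [c N], skipping the first cell. *)
Definition shell_term (k : nat) : R :=
  if (k <=? 1)%nat then 0 else c * (c * INR (k - 1)) ^ d * w (c * INR k).

Lemma shell_terms_le_integral K :
  rsum (S K) shell_term <= RiemannInt (pow_weight_integrable (c * INR K) (grid_nonneg K)).
Proof.
  induction K.
  - unfold shell_term; simpl (rsum 1 _); simpl (0 <=? 1)%nat; cbv iota.
    assert (Hint := RiemannInt_const_bound (l := 0) (u := 0)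
      (pow_weight_integrable (c * INR 0) (grid_nonneg 0)) (grid_nonneg 0)).
    assert (forall x, 0 < x < c * INR 0 -> 0 <= x ^ d * w x <= 0) by (simpl INR; intros; lra).
    specialize (Hint H). lra.
  - set (pr := pow_weight_integrable (c * INR (S K)) (grid_nonneg (S K))).
    assert (H0 : 0 <= c * INR K <= c * INR (S K)) by (split; [apply grid_nonneg|rewrite S_INR; lra]).
    set (pr1 := RiemannInt_P22 pr H0). set (pr2 := RiemannInt_P23 pr H0).
    assert (Hsplit : RiemannInt pr1 + RiemannInt pr2 = RiemannInt pr) by apply RiemannInt_P26.
    assert (Hpr1 : RiemannInt pr1 = RiemannInt (pow_weight_integrable (c * INR K) (grid_nonneg K)))
      by apply RiemannInt_P5.
    assert (Hcell : (c * INR K) ^ d * w (c * INR (S K)) * (c * INR (S K) - c * INR K) <= RiemannInt pr2).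
    { refine (proj1 (RiemannInt_const_bound (u := (c * INR (S K)) ^ d * w (c * INR K)) pr2 _ _)); [lra|].
      intros x Hx. assert (Hk := grid_nonneg K). split.
      - apply Rmult_le_compat; [apply pow_le; auto|left; apply w_pos, grid_nonneg|apply pow_incr; lra|].
        apply w_nonincreasing; lra.
      - apply Rmult_le_compat; [apply pow_le; lra|left; apply w_pos; lra|apply pow_incr; lra|].
        apply w_nonincreasing; lra. }
    replace (c * INR (S K) - c * INR K) with c in Hcell by (rewrite S_INR; ring).
    assert (shell_term (S K) <= (c * INR K) ^ d * w (c * INR (S K)) * c).
    { unfold shell_term. destruct (S K <=? 1)%nat.
      - apply Rmult_le_pos; [|lra]. apply Rmult_le_pos; [apply pow_le, grid_nonneg|].
        left; apply w_pos, grid_nonneg.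
      - replace (S K - 1)%nat with K by lia. lra. }
    cbn [rsum]. cbn [rsum] in IHK. fold pr. lra.
Qed.

Variables (Bw M : R).
Hypothesis w_bounded : forall r, 0 <= r -> w r <= Bw.
Hypothesis w_moment : forall b (pr : Riemann_integrable (fun r => r ^ d * w r) 0 b), 0 <= b ->
  RiemannInt pr <= M.

Lemma shell_sum_bounded K :
  rsum K (fun k => if Nat.eq_dec k 0 then 0 else (2 * INR k + 1) ^ d * w (c * INR k))
    <= 3 ^ d * Bw + 5 ^ d / c ^ (d + 1) * M.
Proof.
  assert (Hcd : 0 < c ^ (d + 1)) by (apply pow_lt; auto).
  assert (HM0 : 0 <= M).
  { eapply Rle_trans; [|apply (w_moment 0 (RiemannInt_P7 _ 0)); lra]. rewrite RiemannInt_P9. lra. }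
  assert (HB0 : 0 <= Bw) by (assert (0 < w 0) by (apply w_pos; lra); assert (w 0 <= Bw) by (apply w_bounded; lra); lra).
  set (q := 5 ^ d / c ^ (d + 1)).
  assert (Hq : 0 <= q) by (apply Rle_mult_inv_pos; [apply pow_le; lra|auto]).
  (* the first shell is bounded by [w <= Bw], the others by [shell_term] since [2k+1 <= 5(k-1)] *)
  apply Rle_trans with (rsum K (fun k => (if Nat.eq_dec k 1 then 3 ^ d * Bw else 0) + q * shell_term k)).
  - apply rsum_le. intros k Hk. unfold shell_term. assert (Hw := w_pos (c * INR k) (grid_nonneg k)).
    destruct (Nat.eq_dec k 0) as [->|]; [simpl; lra|].
    destruct (Nat.eq_dec k 1) as [->|].
    + simpl (1 <=? 1)%nat. cbv iota. rewrite Rmult_0_r, Rplus_0_r.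
      replace (2 * INR 1 + 1) with 3 by (simpl; lra).
      apply Rmult_le_compat_l; [apply pow_le; lra|apply w_bounded, grid_nonneg].
    + destruct (k <=? 1)%nat eqn:E; [apply Nat.leb_le in E; lia|].
      rewrite minus_INR by lia. simpl (INR 1).
      assert (Hk2 : 2 <= INR k) by (replace 2 with (INR 2) by (simpl; lra); apply le_INR; lia).
      replace (q * (c * (c * (INR k - 1)) ^ d * w (c * INR k)))
        with ((5 * (INR k - 1)) ^ d * w (c * INR k))
        by (unfold q; rewrite pow_add, !Rpow_mult_distr; field; repeat split; try apply pow_nonzero; lra).
      rewrite Rplus_0_l. apply Rmult_le_compat_r; [lra|]. apply pow_incr. lra.
  - rewrite rsum_plus, rsum_scal.
    assert (rsum K (fun k => if Nat.eq_dec k 1 then 3 ^ d * Bw else 0) <= 3 ^ d * Bw)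
      by (apply rsum_indicator_le, Rmult_le_pos; [apply pow_le; lra|auto]).
    assert (rsum K shell_term <= M)
      by (destruct K; [simpl; auto|eapply Rle_trans; [apply shell_terms_le_integral|apply w_moment, grid_nonneg]]).
    assert (q * rsum K shell_term <= q * M) by (apply Rmult_le_compat_l; auto). lra.
Qed.

End RadialSum.

Lemma supnorm_shell_count d k P : NoDup P -> Forall (site d) P ->
  INR (length (filter (fun r => if Nat.eq_dec (supnorm r) k then true else false) P)) <= (2 * INR k + 1) ^ d.
Proof.
  intros HN HF.
  replace ((2 * INR k + 1) ^ d) with (INR (length (cube d k)))
    by (rewrite cube_length, pow_INR, plus_INR, mult_INR; simpl; f_equal; lra).
  apply le_INR, NoDup_incl_length; [now apply NoDup_filter|].
  intros r Hr. apply filter_In in Hr. destruct Hr as [Hr1 Hr2].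
  destruct (Nat.eq_dec (supnorm r) k); try discriminate. rewrite Forall_forall in HF.
  apply In_cube; [auto|lia].
Qed.

Lemma radial_lattice_sum_bounded d A (w : R -> R) :
  (forall r s, 0 <= r -> r <= s -> w s <= w r) -> (forall r, 0 <= r -> 0 < w r) ->
  (exists Bw, forall r, 0 <= r -> w r <= Bw) ->
  (exists M, forall b (pr : Riemann_integrable (fun r => r ^ d * w r) 0 b), 0 <= b -> RiemannInt pr <= M) ->
  (exists K, 0 < K /\ forall r, site d r -> INR (supnorm r) <= K * vnorm d (pos d A r)) ->
  exists S, forall P, NoDup P -> Forall (nzsite d) P ->
    rsuml (map (fun r => w (vnorm d (pos d A r))) P) <= S.
Proof.
  intros Hmono Hpos [Bw HBw] [M HM] [K [HK Hsup]].
  set (c := / K). assert (Hc : 0 < c) by (apply Rinv_0_lt_compat; auto).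
  exists (3 ^ d * Bw + 5 ^ d / c ^ (d + 1) * M). intros P HN HF. rewrite Forall_forall in HF.
  set (F := fun k => w (c * INR k)).
  assert (HF0 : forall k, 0 <= F k) by (intros; left; apply Hpos, grid_nonneg, Hc).
  apply Rle_trans with (rsuml (map (fun r => F (supnorm r)) P)).
  { apply rsuml_map_le. intros r Hr. destruct (HF r Hr) as [Hs _].
    apply Hmono; [apply grid_nonneg, Hc|]. unfold c. apply (Rmult_le_reg_l K); auto.
    rewrite <- Rmult_assoc, Rinv_r, Rmult_1_l by lra. auto. }
  set (Kmax := S (fold_right Nat.max O (map supnorm P))).
  eapply Rle_trans; [apply (rsuml_group Nat.eq_dec supnorm _ P (seq 0 Kmax)); auto|].
  { intros x Hx Hn. exfalso. apply Hn, in_seq. split; [lia|].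
    enough (supnorm x <= fold_right Nat.max O (map supnorm P))%nat by (unfold Kmax; lia).
    clear -Hx. induction P; simpl in *; [tauto|]. destruct Hx as [<-|Hx]; [lia|]. specialize (IHP Hx). lia. }
  rewrite (rsuml_map_ext _ (fun k => INR (length (filter
      (fun x => if Nat.eq_dec (supnorm x) k then true else false) P)) * F k)).
  2:{ intros k _. rewrite <- rsuml_const. apply rsuml_map_ext. intros x Hx. apply filter_In in Hx.
      destruct Hx as [_ Hx]. destruct (Nat.eq_dec (supnorm x) k) as [->|]; [auto|discriminate]. }
  rewrite rsuml_seq. eapply Rle_trans; [|apply (shell_sum_bounded w d Hmono Hpos c Hc Bw M HBw HM Kmax)].
  apply rsum_le. intros k Hk. destruct (Nat.eq_dec k 0) as [->|].
  - rewrite (filter_ext_in _ (fun _ => false)), filter_false; [simpl; lra|].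
    intros r Hr. assert (H1 := supnorm_nzsite d r (HF r Hr)).
    destruct (Nat.eq_dec (supnorm r) 0); [lia|auto].
  - apply Rmult_le_compat_r; [apply HF0|]. apply supnorm_shell_count; auto.
    apply Forall_forall. intros r Hr. apply HF; auto.
Qed.

(** * The first derivatives of [V] at the reference configuration *)

Definition DV0 (DV : list (list Z * nat) -> G -> R) (r : list Z) (i : nat) : R :=
  DV [(r, i)] (fun _ _ => 0).

Lemma DV0_odd d n V DV r i : (1 <= n)%nat -> SR d n V DV -> SPS V -> nzsite d r -> (i < d)%nat ->
  DV0 DV (zneg r) i = - DV0 DV r i.
Proof.
  intros Hn [HV HSR] HPS Hr Hi. unfold DV0.
  assert (D := HSR nil ltac:(simpl; lia) (Forall_nil _) r i (conj Hr Hi) (fun _ _ => 0)).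
  assert (Dneg := HSR nil ltac:(simpl; lia) (Forall_nil _) (zneg r) i
                    (conj (nzsite_zneg d r Hr) Hi) (fun _ _ => 0)).
  rewrite HV in D, Dneg.
  (* (S.PS) turns a perturbation of [g_r] into the opposite perturbation of [g_(-r)]. *)
  assert (Hsym : forall t, V (upd (fun _ _ => 0) r i t) = V (upd (fun _ _ => 0) (zneg r) i (- t))).
  { intros t. rewrite <- HPS. f_equal. apply functional_extensionality; intros rho.
    apply functional_extensionality; intros j. unfold upd.
    destruct (zvec_eq_dec (zneg rho) r) as [E|E], (zvec_eq_dec rho (zneg r)) as [E'|E'].
    - destruct (Nat.eq_dec j i); lra.
    - exfalso. apply E'. now rewrite <- E, zneg_involutive.
    - exfalso. apply E. now rewrite E', zneg_involutive.
    - lra. }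
  assert (D' : derivable_pt_lim (fun t => V (upd (fun _ _ => 0) r i t)) 0
                 (DV [(zneg r, i)] (fun _ _ => 0) * (-1))).
  { eapply derivable_pt_lim_ext; [intros; symmetry; apply Hsym|].
    apply (derivable_pt_lim_comp (fun t => - t) (fun s => V (upd (fun _ _ => 0) (zneg r) i s))).
    - replace (-1) with (- 1) by ring. apply derivable_pt_lim_opp, derivable_pt_lim_id.
    - now rewrite Ropp_0. }
  assert (U := uniqueness_limite _ _ _ _ D D'). lra.
Qed.

Lemma DV0_decay d A n DV B : (1 <= n)%nat -> SL d A n DV -> matrix_inverse d A B ->
  exists w1 C, in_L d 1 w1 /\ 0 <= C /\
    forall r i, nzsite d r -> (i < d)%nat -> Rabs (DV0 DV r i) <= C * w1 (vnorm d (pos d A r)).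
Proof.
  intros Hn [w [Hw HSL]] HAB.
  destruct (pos_covering d A B HAB) as [lam [Hlam Hcov]].
  destruct (HSL 1 lam ltac:(lra) Hlam 1%nat ltac:(lia)) as [C HC].
  exists (w 1%nat), (Rmax C 0). split; [apply Hw; lia|]. split; [apply Rmax_r|].
  intros r i Hr Hi.
  (* The reference configuration [x(l) = A l] is admissible with [m = 1]. *)
  assert (Hadm : inA d A 1 lam (fun l' i => pos d A l' i + (fun _ _ => 0) l' i)).
  { split.
    - intros z. destruct (Hcov z) as [l [Hl Hl']]. exists l. split; auto.
      erewrite vnorm_ext; [exact Hl'|]. intros; simpl; ring.
    - intros l l' _ _.
      rewrite (vnorm_ext d _ (fun i => pos d A l i - pos d A l' i)) by (intros; simpl; ring). lra. }
  specialize (HC (fun _ _ => 0) (zero_site d) [r] [i] Hadm (zero_site_length d) eq_refl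
    (Forall_cons _ Hr (Forall_nil _)) eq_refl (@Forall_cons _ (fun k => (k < d)%nat) _ _ Hi (Forall_nil _))).
  replace (Dw (fun _ _ => 0) (zero_site d)) with (fun (_ : list Z) (_ : nat) => 0) in HC
    by (unfold Dw; do 2 (apply functional_extensionality; intros); ring).
  unfold SL_bound, block_term, delta in HC. simpl in HC.
  destruct (zvec_eq_dec r r) as [_|]; [|congruence].
  unfold DV0. eapply Rle_trans; [apply HC|].
  destruct (Hw 1%nat ltac:(lia)) as [_ [Hp _]].
  assert (0 < w 1%nat (vnorm d (pos d A r))) by (apply Hp, vnorm_nonneg).
  assert (C <= Rmax C 0) by apply Rmax_l. nra.
Qed.

Lemma DV0_summable d A n DV B : (1 <= n)%nat -> SL d A n DV -> matrix_inverse d A B ->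
  exists S, forall P, NoDup P -> Forall (nzsite d) P ->
    rsuml (map (fun r => rsum d (fun i => Rabs (DV0 DV r i))) P) <= S.
Proof.
  intros Hn HSL HAB.
  destruct (DV0_decay d A n DV B Hn HSL HAB) as [w1 [C [[Hm [Hp [HB HM]]] [HC HD]]]].
  replace (1 + d - 1)%nat with d in HM by lia.
  destruct (radial_lattice_sum_bounded d A w1 Hm Hp HB HM (supnorm_le_pos d A B HAB)) as [S HS].
  exists (INR d * C * S). intros P HN HF.
  apply Rle_trans with (rsuml (map (fun r => INR d * C * w1 (vnorm d (pos d A r))) P)).
  - apply rsuml_map_le. intros r Hr. rewrite Forall_forall in HF.
    rewrite Rmult_assoc, <- rsum_const. apply rsum_le. intros; apply HD; auto.
  - rewrite rsuml_scal. apply Rmult_le_compat_l; [apply Rmult_le_pos; auto; apply pos_INR|auto].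
Qed.

(** * Unconditional sums *)

Section Unconditional.
Context {T : Type} (eq_dec : forall x y : T, {x = y} + {x <> y}) (P : T -> Prop).

Lemma summable_tail_small (h : T -> R) :
  (exists S, forall L, NoDup L -> Forall P L -> rsuml (map (fun x => Rabs (h x)) L) <= S) ->
  forall eps, 0 < eps -> exists L0, NoDup L0 /\ Forall P L0 /\
    forall L, NoDup L -> Forall P L -> (forall x, In x L0 -> ~ In x L) ->
      rsuml (map (fun x => Rabs (h x)) L) < eps.
Proof.
  intros [S HS] eps Heps.
  set (sums := fun s => exists L, NoDup L /\ Forall P L /\ s = rsuml (map (fun x => Rabs (h x)) L)).
  destruct (completeness sums) as [sup [Hub Hlub]].
  { exists S. intros s [L [HN [HF ->]]]. now apply HS. }
  { exists 0, nil. repeat constructor. }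
  assert (Hnear : exists L0, NoDup L0 /\ Forall P L0 /\ sup - eps < rsuml (map (fun x => Rabs (h x)) L0)).
  { apply NNPP. intros Hno.
    assert (sup <= sup - eps); [|lra].
    apply Hlub. intros s [L [HN [HF ->]]]. apply Rnot_lt_le. intros Hlt. apply Hno. now exists L. }
  destruct Hnear as [L0 [HN0 [HF0 Hs0]]]. exists L0. repeat split; auto.
  intros L HN HF Hdisj.
  assert (rsuml (map (fun x => Rabs (h x)) (L0 ++ L)) <= sup)
    by (apply Hub; exists (L0 ++ L); repeat split; [apply NoDup_app|apply Forall_app]; auto).
  rewrite map_app, rsuml_app in *. lra.
Qed.

Lemma has_sum_common_witness n (f : nat -> T -> R) (S : nat -> R) :
  (forall i, (i < n)%nat -> has_sum P (f i) (S i)) ->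
  forall eps, 0 < eps -> exists L0, NoDup L0 /\ Forall P L0 /\
    forall i, (i < n)%nat -> forall L, NoDup L -> Forall P L -> incl L0 L ->
      Rabs (rsuml (map (f i) L) - S i) < eps.
Proof.
  intros Hsum eps Heps. induction n as [|n IH].
  - exists nil. repeat split; [constructor|constructor|intros; lia].
  - destruct IH as [L1 [HN1 [HF1 H1]]]; [intros; apply Hsum; lia|].
    destruct (Hsum n ltac:(lia) eps Heps) as [L2 [HN2 [HF2 H2]]].
    exists (nodup eq_dec (L1 ++ L2)). split; [apply NoDup_nodup|]. split.
    + apply Forall_forall. intros x Hx. apply nodup_In, in_app_or in Hx.
      rewrite Forall_forall in HF1, HF2. destruct Hx; auto.
    + intros i Hi L HN HF HI.
      assert (incl L1 L) by (intros x Hx; apply HI, nodup_In, in_or_app; auto).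
      assert (incl L2 L) by (intros x Hx; apply HI, nodup_In, in_or_app; auto).
      destruct (Nat.eq_dec i n) as [->|]; [apply H2|apply H1]; auto; lia.
Qed.

End Unconditional.

Lemma odd_sum_zero d (h : list Z -> R) J : NoDup J -> Forall (nzsite d) J ->
  (forall x, In x J -> In (zneg x) J) -> (forall r, nzsite d r -> h (zneg r) = - h r) ->
  rsuml (map h J) = 0.
Proof.
  intros HN HF Hclosed Hodd. rewrite Forall_forall in HF.
  assert (Hperm : Permutation J (map zneg J)).
  { apply NoDup_Permutation; auto.
    - apply NoDup_map_on; auto. intros x y _ _ E. now rewrite <- (zneg_involutive x), E, zneg_involutive.
    - intros x; split; intros Hx.
      + rewrite <- (zneg_involutive x). apply in_map. auto.
      + apply in_map_iff in Hx. destruct Hx as [y [<- Hy]]. auto. }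
  assert (E := rsuml_perm h _ _ Hperm). rewrite map_map in E.
  rewrite (rsuml_map_ext (fun x => h (zneg x)) (fun x => - h x)), rsuml_opp in E; [lra|].
  intros x Hx. apply Hodd, HF, Hx.
Qed.

Lemma odd_summable_has_sum_zero d (h : list Z -> R) :
  (exists S, forall L, NoDup L -> Forall (nzsite d) L -> rsuml (map (fun r => Rabs (h r)) L) <= S) ->
  (forall r, nzsite d r -> h (zneg r) = - h r) ->
  has_sum (nzsite d) h 0.
Proof.
  intros Hsum Hodd eps Heps.
  destruct (summable_tail_small (nzsite d) h Hsum eps Heps) as [L1 [HN1 [HF1 Htail]]].
  (* close [L1] under [zneg]: the sum over the closure vanishes, the rest is a small tail *)
  set (J := nodup zvec_eq_dec (L1 ++ map zneg L1)).
  assert (HJF : Forall (nzsite d) J).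
  { rewrite Forall_forall in *. intros x Hx. apply nodup_In, in_app_or in Hx.
    destruct Hx as [Hx|Hx]; auto. apply in_map_iff in Hx. destruct Hx as [y [<- Hy]]. now apply nzsite_zneg, HF1. }
  assert (HJ0 : rsuml (map h J) = 0).
  { apply (odd_sum_zero d); auto; [apply NoDup_nodup|]. intros x Hx. unfold J in *.
    apply nodup_In in Hx. apply nodup_In, in_or_app. apply in_app_or in Hx. destruct Hx as [Hx|Hx].
    - right. now apply in_map.
    - left. apply in_map_iff in Hx. destruct Hx as [y [<- Hy]]. now rewrite zneg_involutive. }
  exists J. split; [apply NoDup_nodup|]. split; [auto|]. intros L HN HF HI.
  set (inJ := fun x => if in_dec zvec_eq_dec x J then true else false).
  rewrite (rsuml_split inJ), Rminus_0_r.
  rewrite (rsuml_support zvec_eq_dec h (filter inJ L) J), HJ0, Rplus_0_l; [| |apply NoDup_nodup| |].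
  - eapply Rle_lt_trans; [apply rsuml_abs|]. apply Htail; [now apply NoDup_filter| |].
    + rewrite Forall_forall in *. intros x Hx. apply filter_In in Hx. apply HF; tauto.
    + intros a Ha Hb. apply filter_In in Hb. destruct Hb as [_ Hb]. unfold inJ in Hb.
      destruct (in_dec zvec_eq_dec a J) as [|Hn]; [discriminate|]. apply Hn, nodup_In, in_or_app; auto.
  - now apply NoDup_filter.
  - intros x Hx. apply filter_In. split; [auto|]. unfold inJ. now destruct (in_dec zvec_eq_dec x J).
  - intros x Hx Hn. apply filter_In in Hx. unfold inJ in Hx.
    destruct (in_dec zvec_eq_dec x J); [contradiction|destruct Hx; discriminate].
Qed.

(** * Summation of the first-order term *)

Lemma const_outside_cube d A B u : matrix_inverse d A B -> const_outside_ball d A u ->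
  exists (c : nat -> R) (N : nat), forall l, site d l -> ~ In l (cube d N) ->
    forall i, (i < d)%nat -> u l i = c i.
Proof.
  intros HAB [Rr [c Hc]]. destruct (supnorm_le_pos d A B HAB) as [K [HK Hsup]].
  exists c, (Z.to_nat (up (K * Rr))). intros l Hl Hout i Hi. apply Hc; auto.
  assert (Hgt : (Z.to_nat (up (K * Rr)) < supnorm l)%nat).
  { destruct (Nat.lt_ge_cases (Z.to_nat (up (K * Rr))) (supnorm l)) as [|Hle]; auto.
    exfalso. now apply Hout, In_cube. }
  apply lt_INR in Hgt. rewrite INR_IZR_INZ in Hgt.
  destruct (archimed (K * Rr)) as [Hup _].
  assert (IZR (up (K * Rr)) <= IZR (Z.of_nat (Z.to_nat (up (K * Rr))))) by (apply IZR_le; lia).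
  specialize (Hsup l Hl). apply Rle_ge, (Rmult_le_reg_l K); auto. lra.
Qed.

Section FirstOrderTerm.
Variables (d : nat) (DV : list (list Z * nat) -> G -> R) (u : list Z -> nat -> R) (c : nat -> R).
Variable C : list (list Z).
Hypothesis C_NoDup : NoDup C.
Hypothesis C_site : forall m, In m C -> site d m.
Hypothesis u_const : forall l, site d l -> ~ In l C -> forall i, (i < d)%nat -> u l i = c i.
Variable DS : R.
Hypothesis DV0_bounded : forall P, NoDup P -> Forall (nzsite d) P ->
  rsuml (map (fun r => rsum d (fun i => Rabs (DV0 DV r i))) P) <= DS.
Hypothesis DV0_antisymmetric : forall r i, nzsite d r -> (i < d)%nat -> DV0 DV (zneg r) i = - DV0 DV r i.

Let v l i := u l i - c i.
Let vabs l := rsum d (fun i => Rabs (v l i)).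
Let dabs r := rsum d (fun i => Rabs (DV0 DV r i)).

Lemma v_outside l i : site d l -> ~ In l C -> (i < d)%nat -> v l i = 0.
Proof. intros. unfold v. rewrite u_const; auto. ring. Qed.

Lemma vabs_nonneg l : 0 <= vabs l.
Proof. apply rsum_nonneg; intros; apply Rabs_pos. Qed.

Lemma fterm_v l r : fterm d DV u l r = rsum d (fun i => DV0 DV r i * (v (zadd l r) i - v l i)).
Proof. apply rsum_ext. intros. unfold v, DV0. ring. Qed.

Lemma fterm_abs_le l r : Rabs (fterm d DV u l r) <= dabs r * (vabs (zadd l r) + vabs l).
Proof.
  rewrite fterm_v. eapply Rle_trans; [apply rsum_abs|].
  unfold dabs. rewrite Rmult_comm, <- rsum_scal. apply rsum_le. intros i Hi.
  rewrite Rabs_mult, Rmult_comm. apply Rmult_le_compat_r; [apply Rabs_pos|].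
  eapply Rle_trans; [apply Rabs_triang|]. rewrite Rabs_Ropp. unfold vabs.
  assert (Rabs (v (zadd l r) i) <= rsum d (fun i => Rabs (v (zadd l r) i)))
    by (apply (rsum_term_le d (fun i => Rabs (v (zadd l r) i))); auto; intros; apply Rabs_pos).
  assert (Rabs (v l i) <= rsum d (fun i => Rabs (v l i)))
    by (apply (rsum_term_le d (fun i => Rabs (v l i))); auto; intros; apply Rabs_pos).
  lra.
Qed.

(* Grouping the pairs by the site [key p], injectivity in [snd p] leaves one [DV0]-sum per site of [C]. *)
Lemma keyed_sum_le (L : list (list Z * list Z)) (key : list Z * list Z -> list Z) :
  NoDup L -> (forall p q, In p L -> In q L -> key p = key q -> snd p = snd q -> p = q) ->
  (forall p, In p L -> nzsite d (snd p)) -> (forall p, In p L -> site d (key p)) ->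
  rsuml (map (fun p => dabs (snd p) * vabs (key p)) L) <= DS * rsuml (map vabs C).
Proof.
  intros HN Hinj Hnz Hs.
  eapply Rle_trans; [apply (rsuml_group zvec_eq_dec key _ L C)|].
  { intros; apply Rmult_le_pos; [apply rsum_nonneg; intros; apply Rabs_pos|apply vabs_nonneg]. }
  { intros p Hp Hn. unfold vabs. rewrite (rsum_ext _ _ (fun _ => 0)), rsum_zero; [ring|].
    intros i Hi. rewrite v_outside, Rabs_R0; auto. }
  rewrite <- rsuml_scal. apply rsuml_map_le. intros m Hm.
  rewrite (rsuml_map_ext _ (fun p => vabs m * dabs (snd p))).
  2:{ intros p Hp. apply filter_In in Hp. destruct Hp as [_ Hp].
      destruct (zvec_eq_dec (key p) m) as [->|]; [ring|discriminate]. }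
  rewrite rsuml_scal, Rmult_comm. apply Rmult_le_compat_r; [apply vabs_nonneg|].
  rewrite <- (map_map snd dabs). apply DV0_bounded.
  - apply NoDup_map_on; [now apply NoDup_filter|]. intros p q Hp Hq E.
    apply filter_In in Hp. apply filter_In in Hq. destruct Hp as [Hp Hp'], Hq as [Hq Hq'].
    destruct (zvec_eq_dec (key p) m), (zvec_eq_dec (key q) m); try discriminate.
    apply Hinj; auto. congruence.
  - apply Forall_forall. intros r Hr. apply in_map_iff in Hr. destruct Hr as [p [<- Hp]].
    apply filter_In in Hp. apply Hnz; tauto.
Qed.

Lemma fterm_summable : summable_on (fun p : list Z * list Z => site d (fst p) /\ nzsite d (snd p))
                         (fun p => fterm d DV u (fst p) (snd p)).
Proof.
  exists (2 * (DS * rsuml (map vabs C))). intros L HN HF. rewrite Forall_forall in HF.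
  eapply Rle_trans; [apply rsuml_map_le; intros p _; apply fterm_abs_le|].
  rewrite (rsuml_map_ext _ (fun p => dabs (snd p) * vabs (zadd (fst p) (snd p)) + dabs (snd p) * vabs (fst p)))
    by (intros; ring).
  rewrite rsuml_plus.
  enough (rsuml (map (fun p => dabs (snd p) * vabs (zadd (fst p) (snd p))) L) <= DS * rsuml (map vabs C) /\
          rsuml (map (fun p => dabs (snd p) * vabs (fst p)) L) <= DS * rsuml (map vabs C)) by lra.
  split; apply keyed_sum_le; auto; try (intros p Hp; apply HF; auto).
  - intros [l r] [l' r'] Hp Hq E E'. simpl in *. subst r'.
    destruct (HF _ Hp) as [Hl [Hr _]], (HF _ Hq) as [Hl' _]. simpl in *. unfold site in *.
    f_equal. rewrite <- (zsub_zadd r l), <- (zsub_zadd r l'), (zadd_comm r l), (zadd_comm r l'), E by lia.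
    reflexivity.
  - intros p Hp. destruct (HF p Hp) as [Hl [Hr _]]. now apply site_zadd.
  - intros [l r] [l' r'] Hp Hq E E'. simpl in *. now subst.
Qed.

Lemma DV0_common_witness eps : 0 < eps -> exists J, NoDup J /\ Forall (nzsite d) J /\
  forall i, (i < d)%nat -> forall P, NoDup P -> Forall (nzsite d) P -> incl J P ->
    Rabs (rsuml (map (fun r => DV0 DV r i) P)) < eps.
Proof.
  intros Heps.
  destruct (has_sum_common_witness zvec_eq_dec (nzsite d) d (fun i r => DV0 DV r i) (fun _ => 0))
    with (eps := eps) as [J [HN [HF HJ]]]; auto.
  - intros i Hi. apply odd_summable_has_sum_zero; [|intros; now apply DV0_antisymmetric].
    exists DS. intros L HN HF. eapply Rle_trans; [|apply (DV0_bounded L HN HF)].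
    apply rsuml_map_le. intros r _.
    apply (rsum_term_le d (fun i => Rabs (DV0 DV r i))); auto. intros; apply Rabs_pos.
  - exists J. repeat split; auto. intros i Hi P HN' HF' HI.
    rewrite <- (Rminus_0_r (rsuml _)). now apply HJ.
Qed.

(* After the cancellation [sum_r DV0 r = 0], the inner sum only sees the values [v m], [m] in [C]. *)
Definition inner_sum l : R :=
  rsum d (fun i => rsuml (map (fun m => if zvec_eq_dec m l then 0 else DV0 DV (zsub m l) i * v m i) C)).

Definition translates (l : list Z) : list (list Z) :=
  map (fun m => zsub m l) (filter (fun m => if zvec_eq_dec m l then false else true) C).

Lemma translates_NoDup_nzsite l : site d l -> NoDup (translates l) /\ Forall (nzsite d) (translates l).
Proof.
  intros Hl. split.
  - apply NoDup_map_on; [now apply NoDup_filter|]. intros m m' Hm Hm' E.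
    apply filter_In in Hm. apply filter_In in Hm'.
    assert (Hs := C_site m (proj1 Hm)). assert (Hs' := C_site m' (proj1 Hm')). unfold site in *.
    rewrite <- (zadd_zsub l m), <- (zadd_zsub l m'), E; auto; lia.
  - apply Forall_forall. intros r Hr. apply in_map_iff in Hr. destruct Hr as [m [<- Hm]].
    apply filter_In in Hm. destruct Hm as [Hm Hm'].
    destruct (zvec_eq_dec m l); [discriminate|]. apply nzsite_zsub; auto.
Qed.

Lemma rsuml_translate l i P : site d l -> (i < d)%nat -> NoDup P -> Forall (nzsite d) P ->
  incl (translates l) P ->
  rsuml (map (fun r => DV0 DV r i * v (zadd l r) i) P) =
  rsuml (map (fun m => if zvec_eq_dec m l then 0 else DV0 DV (zsub m l) i * v m i) C).
Proof.
  intros Hl Hi HN HF HI. rewrite Forall_forall in HF.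
  destruct (translates_NoDup_nzsite l Hl) as [HQN _].
  rewrite (rsuml_support zvec_eq_dec _ P (translates l)); auto.
  - unfold translates. rewrite map_map, rsuml_filter. apply rsuml_map_ext. intros m Hm.
    destruct (zvec_eq_dec m l); [auto|]. rewrite zadd_zsub; auto.
    assert (Hs := C_site m Hm). unfold site in *; lia.
  - intros r Hr Hout. destruct (HF r Hr) as [Hrs Hr0].
    rewrite v_outside; [ring|apply site_zadd; auto| |auto].
    intros Hin. apply Hout, in_map_iff. exists (zadd l r). unfold site in *.
    split; [apply zsub_zadd; lia|]. apply filter_In. split; auto.
    destruct (zvec_eq_dec (zadd l r) l) as [E|]; auto. exfalso. apply Hr0.
    now rewrite <- (zsub_zadd l r), E, zsub_diag, Hl by lia.
Qed.

Lemma fterm_has_inner_sum l : site d l -> has_sum (nzsite d) (fun r => fterm d DV u l r) (inner_sum l).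
Proof.
  intros Hl eps Heps.
  assert (Hv := vabs_nonneg l).
  destruct (DV0_common_witness (eps / (vabs l + 1))) as [J [HJN [HJF HJ]]];
    [apply Rdiv_lt_0_compat; lra|].
  destruct (translates_NoDup_nzsite l Hl) as [HQN HQF].
  exists (nodup zvec_eq_dec (translates l ++ J)). split; [apply NoDup_nodup|]. split.
  { apply Forall_forall. intros x Hx. apply nodup_In, in_app_or in Hx.
    rewrite Forall_forall in HJF, HQF. destruct Hx; auto. }
  intros P HN HF HI.
  assert (HQP : incl (translates l) P) by (intros x Hx; apply HI, nodup_In, in_or_app; auto).
  assert (HJP : incl J P) by (intros x Hx; apply HI, nodup_In, in_or_app; auto).
  (* the neighbour values reindex to [inner_sum l]; what remains is [v l] times a small tail *)
  rewrite (rsuml_map_ext _ (fun r => rsum d (fun i => DV0 DV r i * v (zadd l r) i - v l i * DV0 DV r i)))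
    by (intros r _; rewrite fterm_v; apply rsum_ext; intros; ring).
  rewrite rsuml_rsum. unfold inner_sum. rewrite <- rsum_minus.
  rewrite (rsum_ext _ _ (fun i => - (v l i * rsuml (map (fun r => DV0 DV r i) P))))
    by (intros i Hi; rewrite rsuml_minus, rsuml_scal, rsuml_translate by auto; ring).
  eapply Rle_lt_trans; [apply rsum_abs|].
  apply Rle_lt_trans with (rsum d (fun i => Rabs (v l i) * (eps / (vabs l + 1)))).
  - apply rsum_le. intros i Hi. rewrite Rabs_Ropp, Rabs_mult.
    apply Rmult_le_compat_l; [apply Rabs_pos|]. left. now apply HJ.
  - rewrite (rsum_ext _ _ (fun i => eps / (vabs l + 1) * Rabs (v l i))), rsum_scal by (intros; ring).
    fold (vabs l). apply (Rmult_lt_reg_r (vabs l + 1)); [lra|].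
    replace (eps / (vabs l + 1) * vabs l * (vabs l + 1)) with (eps * vabs l) by (field; lra). nra.
Qed.

Definition reflects (m : list Z) (L : list (list Z)) : list (list Z) :=
  map (zsub m) (filter (fun l => if zvec_eq_dec m l then false else true) L).

Lemma rsuml_reflect m i L :
  rsuml (map (fun l => if zvec_eq_dec m l then 0 else DV0 DV (zsub m l) i * v m i) L) =
  v m i * rsuml (map (fun r => DV0 DV r i) (reflects m L)).
Proof.
  unfold reflects. rewrite map_map, rsuml_filter, <- rsuml_scal. apply rsuml_map_ext. intros l _.
  destruct (zvec_eq_dec m l); ring.
Qed.

Lemma reflects_NoDup_nzsite m L : site d m -> NoDup L -> Forall (site d) L ->
  NoDup (reflects m L) /\ Forall (nzsite d) (reflects m L).
Proof.
  intros Hm HN HF. rewrite Forall_forall in HF. split.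
  - apply NoDup_map_on; [now apply NoDup_filter|]. intros a b Ha Hb Eab.
    apply filter_In in Ha. apply filter_In in Hb.
    assert (Has := HF a (proj1 Ha)). assert (Hbs := HF b (proj1 Hb)).
    unfold site in *. apply (zsub_inj m); auto; lia.
  - apply Forall_forall. intros r Hr. apply in_map_iff in Hr. destruct Hr as [l [<- Hl]].
    apply filter_In in Hl. destruct Hl as [Hl Hl']. destruct (zvec_eq_dec m l); [discriminate|].
    apply nzsite_zsub; auto.
Qed.

Lemma incl_reflects m J L : site d m -> Forall (nzsite d) J -> incl (map (zsub m) J) L ->
  incl J (reflects m L).
Proof.
  intros Hm HJ HI r Hr. rewrite Forall_forall in HJ. destruct (HJ r Hr) as [Hrs Hr0].
  unfold site in *. apply in_map_iff. exists (zsub m r). split; [apply zsub_involutive; lia|].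
  apply filter_In. split; [now apply HI, in_map|].
  destruct (zvec_eq_dec m (zsub m r)) as [E|]; auto. exfalso. apply Hr0.
  now rewrite <- (zsub_involutive m r), <- E, zsub_diag, Hm by lia.
Qed.

Lemma inner_sum_has_sum_zero : has_sum (site d) inner_sum 0.
Proof.
  intros eps Heps.
  set (SV := rsuml (map vabs C)).
  assert (HSV : 0 <= SV) by (apply rsuml_map_nonneg; intros; apply vabs_nonneg).
  destruct (DV0_common_witness (eps / (SV + 1))) as [J [HJN [HJF HJ]]];
    [apply Rdiv_lt_0_compat; lra|].
  exists (nodup zvec_eq_dec (flat_map (fun m => map (zsub m) J) C)).
  split; [apply NoDup_nodup|]. split.
  { rewrite Forall_forall in *. intros x Hx. apply nodup_In, in_flat_map in Hx. destruct Hx as [m [Hm Hx]].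
    apply in_map_iff in Hx. destruct Hx as [r [<- Hr]]. apply site_zsub; auto. apply HJF; auto. }
  intros L HN HF HI. rewrite Rminus_0_r. unfold inner_sum. rewrite rsuml_rsum.
  (* exchanging the sums over [l] and [m], each [m] carries [v m] times a tail of [sum DV0] *)
  apply Rle_lt_trans with (rsum d (fun i => rsuml (map (fun m => Rabs (v m i) * (eps / (SV + 1))) C))).
  - eapply Rle_trans; [apply rsum_abs|]. apply rsum_le. intros i Hi.
    rewrite rsuml_swap. eapply Rle_trans; [apply rsuml_abs|]. apply rsuml_map_le. intros m Hm.
    destruct (reflects_NoDup_nzsite m L (C_site m Hm) HN HF) as [HRN HRF].
    rewrite rsuml_reflect, Rabs_mult. apply Rmult_le_compat_l; [apply Rabs_pos|]. left. apply HJ; auto.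
    apply incl_reflects; auto. intros x Hx. apply HI, nodup_In, in_flat_map. eauto.
  - rewrite <- rsuml_rsum, (rsuml_map_ext _ (fun m => eps / (SV + 1) * vabs m)).
    2:{ intros m _. unfold vabs. rewrite <- rsum_scal. apply rsum_ext. intros; ring. }
    rewrite rsuml_scal. fold SV. apply (Rmult_lt_reg_r (SV + 1)); [lra|].
    replace (eps / (SV + 1) * SV * (SV + 1)) with (eps * SV) by (field; lra). nra.
Qed.

End FirstOrderTerm.

Theorem mainTheorem3 (d : nat) (A : nat -> nat -> R) (n : nat)
    (V : G -> R) (DV : list (list Z * nat) -> G -> R) :
  (d = 2%nat \/ d = 3%nat) -> nonsingular d A -> (3 <= n)%nat ->
  respects d V -> SR d n V DV -> SL d A n DV -> SPS V ->
  forall u : list Z -> nat -> R, const_outside_ball d A u ->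
    summable_on (fun p : list Z * list Z => site d (fst p) /\ nzsite d (snd p))
                (fun p => fterm d DV u (fst p) (snd p)) /\
    exists s : list Z -> R,
      (forall l, site d l -> has_sum (nzsite d) (fun rho => fterm d DV u l rho) (s l)) /\
      has_sum (site d) s 0.
Proof.
  intros Hd Hns Hn _ HSR HSL HPS u Hu.
  destruct (nonsingular_inverse d A Hd Hns) as [B HAB].
  destruct (DV0_summable d A n DV B ltac:(lia) HSL HAB) as [DS HDS].
  destruct (const_outside_cube d A B u HAB Hu) as [c [N Hc]].
  set (C := nodup zvec_eq_dec (cube d N)).
  assert (HCs : forall m, In m C -> site d m) by (intros m Hm; apply nodup_In, cube_site in Hm; auto).
  assert (Huc : forall l, site d l -> ~ In l C -> forall i, (i < d)%nat -> u l i = c i)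
    by (intros l Hl Hout; apply Hc; auto; intros Hin; apply Hout, nodup_In, Hin).
  assert (Hodd : forall r i, nzsite d r -> (i < d)%nat -> DV0 DV (zneg r) i = - DV0 DV r i)
    by (intros; apply (DV0_odd d n V DV); auto; lia).
  split.
  - eapply fterm_summable; eauto.
  - exists (inner_sum d DV u c C). split.
    + eapply fterm_has_inner_sum; eauto using NoDup_nodup.
    + eapply inner_sum_has_sum_zero; eauto using NoDup_nodup.
Qed.
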